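(* Let $b>1$, $p\ge1$, $R\subseteq\{0,\ldots,p-1\}$ and let $I\subseteq\mathbb{N}$ be finite and non-empty. Let $k$ be the greatest divisor of $p$ coprime with $b$ and $d=p/k$. A state $s$ of $\mathcal{C}_{R,p,I}$ belongs to a $0$-circuit if and only if either $s$ is the initial state, or $s=(xd,\bot)$ for some $x\in\{0,\ldots,k-1\}$.
   Context: $A_b=\{0,\ldots,b-1\}$. $\mathcal{A}_{R,p}$: states $\{0,\ldots,p-1\}$, initial $0$, final $R$, transitions $n\xrightarrow{a}(nb+a)\bmod p$. With $m=\max I$, $\mathcal{B}_I$: states $\{0,\ldots,m\}\cup\{\bot\}$, initial $0$, final $I$, transitions $i\xrightarrow{a}ib+a$ if $ib+a\le m$, else $i\xrightarrow{a}\bot$, and $\bot\xrightarrow{a}\bot$. $\mathcal{C}_{R,p,I}$ is the accessible part (states reachable from the initial state $(0,0)$) of the product of $\mathcal{A}_{R,p}$ and $\mathcal{B}_I$, with transitions $(s,t)\xrightarrow{a}(s',t')$ iff $s\xrightarrow{a}s'$ and $t\xrightarrow{a}t'$, and $(s,t)$ final iff exactly one of $s\in R$, $t\in I$ holds. A $0$-circuit is a circuit all of whose transitions are labelled $0$. *)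

From mathcomp Require Import all_boot.
Set Implicit Arguments. Unset Strict Implicit. Unset Printing Implicit Defensive.

(* States of A_{R,p} are naturals n < p; states of B_I are [Some i] (i <= m)
   and [None] = bottom. *)
Definition Bstate := option nat.

Definition maxI (I : seq nat) : nat := \max_(i <- I) i.

Definition deltaA (b p : nat) (n a : nat) : nat := (n * b + a) %% p.

Definition deltaB (b m : nat) (t : Bstate) (a : nat) : Bstate :=
  match t with
  | Some i => if i * b + a <= m then Some (i * b + a) else None
  | None => None
  end.

Definition deltaC (b p m : nat) (st : nat * Bstate) (a : nat) : nat * Bstate :=
  (deltaA b p st.1 a, deltaB b m st.2 a).

Definition initC : nat * Bstate := (0, Some 0).

Definition finalC (R I : seq nat) (st : nat * Bstate) : bool :=
  (st.1 \in R) (+) (if st.2 is Some i then i \in I else false).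

(* the states of C_{R,p,I}: the accessible part of the product *)
Definition accessibleC (b p m : nat) (st : nat * Bstate) : Prop :=
  exists w : seq nat, all (fun a => a < b) w /\ foldl (deltaC b p m) initC w = st.

(* s lies on a 0-circuit: a nonempty closed path of 0-labelled transitions
   through s (the product automaton is deterministic, so this is iteration). *)
Definition on_zero_circuit (b p m : nat) (st : nat * Bstate) : Prop :=
  exists n, 0 < n /\ iter n (fun s => deltaC b p m s 0) st = st.

Definition kdiv (p b : nat) : nat := \max_(d < p.+1 | (d %| p) && coprime d b) d.

From mathcomp Require Import all_boot.
From mathcomp Require Import cyclic.

Set Implicit Arguments.
Unset Strict Implicit.
Unset Printing Implicit Defensive.

(* Reading a 0 multiplies the first component by b modulo p and the second
   by b until it overflows to bottom.  A state (i, Some j) on a 0-circuit must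
   have j = j * b ^ n with n > 0, so j = 0, and accessibility then forces
   i = 0.  A state (a, None) lies on a 0-circuit iff a * b ^ n = a (mod p) for
   some n > 0, i.e. p divides a * (b ^ n - 1).  Since b ^ n - 1 is coprime to
   b, maximality of k makes it coprime to d = p / k, so d divides a;
   conversely, if a = x * d then Euler's theorem b ^ totient k = 1 (mod k)
   gives a 0-circuit of length totient k. *)

Lemma coprime_expn_subn1 b n : 0 < b -> 0 < n -> coprime (b ^ n - 1) b.
Proof.
move=> b_gt0 n_gt0; have bn_gt0 : 0 < b ^ n by rewrite expn_gt0 b_gt0.
rewrite -(coprime_pexpr _ _ n_gt0) subn1 coprime_sym.
by rewrite -{1}(prednK bn_gt0) coprimeSn.
Qed.

Section GreatestCoprimeDivisor.

Variables p b : nat.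
Hypothesis p_gt0 : 0 < p.

Let coprime_divisor (d : 'I_p.+1) := (d %| p) && coprime d b.

Lemma leq_kdiv e : e %| p -> coprime e b -> e <= kdiv p b.
Proof.
move=> e_dvd_p e_cop_b; have e_lt_Sp : e < p.+1 by rewrite ltnS dvdn_leq.
exact: (@leq_bigmax_cond _ coprime_divisor _ (Ordinal e_lt_Sp)) (introT andP _).
Qed.

Lemma kdiv_gt0 : 0 < kdiv p b.
Proof. exact: leq_kdiv (dvd1n p) (coprime1n b). Qed.

Lemma kdiv_dvdn_coprime : kdiv p b %| p /\ coprime (kdiv p b) b.
Proof.
have one_lt_Sp : 1 < p.+1 by rewrite ltnS.
have cd1 : coprime_divisor (Ordinal one_lt_Sp) by rewrite /coprime_divisor dvd1n coprime1n.
rewrite /kdiv (bigmax_eq_arg _ cd1).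
by case: arg_maxnP => // i /andP [].
Qed.

Lemma kdiv_mulnK : p %/ kdiv p b * kdiv p b = p.
Proof. by rewrite divnK //; case: kdiv_dvdn_coprime. Qed.

Lemma divn_kdiv_gt0 : 0 < p %/ kdiv p b.
Proof. by move: p_gt0; rewrite -{1}kdiv_mulnK muln_gt0 => /andP []. Qed.

Lemma coprime_divn_kdiv c : coprime c b -> coprime (p %/ kdiv p b) c.
Proof.
move=> c_cop_b; set k := kdiv p b; set d := p %/ k; set g := gcdn d c.
have [_ k_cop_b] := kdiv_dvdn_coprime.
have : g * k <= k.
  apply: leq_kdiv; first by rewrite -kdiv_mulnK dvdn_mul ?dvdn_gcdl.
  by rewrite coprimeMl k_cop_b andbT (coprime_dvdl (dvdn_gcdr _ _)).
rewrite -{2}(mul1n k) leq_pmul2r ?kdiv_gt0 // => g_le1.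
by rewrite /coprime eqn_leq g_le1 gcdn_gt0 divn_kdiv_gt0.
Qed.

Lemma mulexp_eqmod_self a : 0 < b -> a < p ->
  (exists2 n, 0 < n & a * b ^ n = a %[mod p]) <->
  (exists2 x, x < kdiv p b & a = x * (p %/ kdiv p b)).
Proof.
move=> b_gt0 a_lt_p; have k_gt0 := kdiv_gt0; have [_ k_cop_b] := kdiv_dvdn_coprime.
have d_gt0 := divn_kdiv_gt0; have dk_eq_p := kdiv_mulnK.
set k := kdiv p b in k_gt0 k_cop_b d_gt0 dk_eq_p *.
set d := p %/ k in d_gt0 dk_eq_p *.
split=> [[n n_gt0 cycle_a] | [x x_lt_k ->]].
- have p_dvd : p %| a * (b ^ n - 1).
    rewrite mulnBr muln1 -eqn_mod_dvd; first exact/eqP.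
    by rewrite leq_pmulr // expn_gt0 b_gt0.
  have d_dvd_a : d %| a.
    have d_cop : coprime d (b ^ n - 1).
      exact: coprime_divn_kdiv (coprime_expn_subn1 b_gt0 n_gt0).
    rewrite -(Gauss_dvdl a d_cop); apply: dvdn_trans p_dvd.
    by rewrite -[X in _ %| X]dk_eq_p dvdn_mulr.
  exists (a %/ d); last by rewrite divnK.
  by rewrite ltn_divLR // mulnC dk_eq_p.
- exists (totient k); first by rewrite totient_gt0.
  rewrite -dk_eq_p mulnAC (mulnC d) -!muln_modl.
  by rewrite -modnMmr Euler_exp_totient 1?coprime_sym // modnMmr muln1.
Qed.

End GreatestCoprimeDivisor.

Section ZeroTransitions.

Variables b p m : nat.

Local Notation step := (fun s => deltaC b p m s 0).
Local Notation stepB := (fun t => deltaB b m t 0).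

Lemma iter_step_fst_mod n s : (iter n step s).1 %% p = s.1 * b ^ n %% p.
Proof.
elim: n => [|n IHn]; first by rewrite muln1.
by rewrite iterS /deltaC /deltaA /= addn0 modn_mod -modnMml IHn modnMml expnSr mulnA.
Qed.

Lemma iter_step_fst n s : (iter n.+1 step s).1 = s.1 * b ^ n.+1 %% p.
Proof.
by rewrite -iter_step_fst_mod iterS /deltaC /deltaA /= modn_mod.
Qed.

Lemma iter_step_snd n s : (iter n step s).2 = iter n stepB s.2.
Proof. by elim: n => //= n ->. Qed.

Lemma iter_stepB_None n : iter n stepB None = None.
Proof. by elim: n => //= n ->. Qed.

Lemma iter_stepB_Some n i j : iter n stepB (Some i) = Some j -> j = i * b ^ n.
Proof.
elim: n j => [|n IHn] j /=; first by case=> <-; rewrite muln1.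
case: (iter n stepB (Some i)) IHn => [j'|] //= IHn.
rewrite addn0; case: ifP => // _ [<-].
by rewrite (IHn j') // expnSr mulnA.
Qed.

Lemma accessibleC_inv s : 0 < p -> accessibleC b p m s ->
  s.1 < p /\ (forall i, s.2 = Some i -> s.1 = i %% p).
Proof.
move=> p_gt0 [w [_ <-]].
have : initC.1 < p /\ (forall i, initC.2 = Some i -> initC.1 = i %% p).
  by split=> // i [<-]; rewrite mod0n.
elim: w initC => //= a w IHw [n t] /= [_ inv_nt]; apply: IHw.
split; first by rewrite /deltaA ltn_pmod.
case: t inv_nt => [i|] //= inv_nt j; case: ifP => // _ [<-].
by rewrite /deltaA (inv_nt i) // -modnDml modnMml modnDml.
Qed.

Lemma initC_on_zero_circuit : on_zero_circuit b p m initC.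
Proof. by exists 1; rewrite /= /deltaC /deltaA /deltaB /= mod0n. Qed.

Lemma on_zero_circuit_Some a i : 1 < b -> on_zero_circuit b p m (a, Some i) -> i = 0.
Proof.
move=> b_gt1 [n [n_gt0 cycle_s]].
have := iter_step_snd n (a, Some i); rewrite cycle_s => /esym/iter_stepB_Some i_eq.
have bn_gt1 : 1 < b ^ n by rewrite -(expn0 b) ltn_exp2l.
apply/eqP; move/eqP: i_eq; rewrite -{1}[i]muln1 eqn_mul2l (ltn_eqF bn_gt1).
by rewrite orbF.
Qed.

Lemma on_zero_circuit_None a : a < p ->
  on_zero_circuit b p m (a, None) <-> exists2 n, 0 < n & a * b ^ n = a %[mod p].
Proof.
move=> a_lt_p; split=> [[n [n_gt0 cycle_s]] | [n n_gt0 cycle_a]].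
- exists n => //.
  by have := iter_step_fst_mod n (a, None); rewrite cycle_s /= => ->.
- exists n; split => //; case: n n_gt0 cycle_a => // n _ cycle_a.
  rewrite [iter _ _ _]surjective_pairing iter_step_snd iter_stepB_None.
  by rewrite iter_step_fst /= cycle_a modn_small.
Qed.

End ZeroTransitions.

Theorem lemma38 (b p : nat) (R I : seq nat) :
  1 < b -> 1 <= p -> all (fun r => r < p) R -> I != [::] ->
  forall s : nat * Bstate, accessibleC b p (maxI I) s ->
  (on_zero_circuit b p (maxI I) s <->
   s = initC \/
   exists x, x < kdiv p b /\ s = (x * (p %/ kdiv p b), None)).
Proof.
move=> b_gt1 p_gt0 _ _ [a [i|]] acc_s;
  have [/= a_lt_p a_mod] := accessibleC_inv p_gt0 acc_s.
- split=> [/on_zero_circuit_Some i0 | [-> | [x [_ []]]]] //.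
    by left; rewrite (a_mod i) // (i0 b_gt1) mod0n.
  exact: initC_on_zero_circuit.
- apply: iff_trans (on_zero_circuit_None _ _ a_lt_p) _.
  apply: iff_trans (mulexp_eqmod_self p_gt0 (ltnW b_gt1) a_lt_p) _.
  split=> [[x x_lt_k ->] | [// | [x [x_lt_k [->]]]]]; last by exists x.
  by right; exists x.
Qed.
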